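(* Let $\sigma=\langle\mathcal V,\mathcal C,S,B\rangle$ be an approval-based multi-winner election, and fix any run of ODH on $\sigma$, with arbitrary choices of the functions $F$ and arbitrary tie-breaking. For $i=0,\dots,S-1$, let $\mathcal C_e^i$ be the set of the first $i$ candidates chosen in this run, with $\mathcal C_e^0=\emptyset$. Then for every $c\in\mathcal C\setminus\mathcal C_e^i$ and every $F\in\mathfrak F^{\mathrm{opt}}_{\sigma,\mathcal C_e^i\cup\{c\}}$, $$\mathrm{Supp}_F(c)=\mathrm{maxMin}(\sigma,\mathcal C_e^i\cup\{c\}).$$ In particular, the value $s_c$ computed by ODH at each iteration does not depend on the choice of $F$.
   Context: An approval-based multi-winner election is a tuple $\sigma=\langle \mathcal V,\mathcal C,S,B\rangle$, where $\mathcal V$ is a finite set of agents, $\mathcal C$ is a finite set of candidates, $1\le S\le|\mathcal C|$ is an integer, and $B:2^{\mathcal C}\to\mathbb N$ gives, for each $\mathcal A\subseteq\mathcal C$, the number $B(\mathcal A)$ of agents whose ballot is exactly $\mathcal A$ (with $\sum_{\mathcal A}B(\mathcal A)\le|\mathcal V|$). For a non-empty $\mathcal A\subseteq\mathcal C$, the family $\mathfrak F_{\sigma,\mathcal A}$ is the set of all $F:2^{\mathcal C}\times\mathcal A\to\mathbb R$ such that: - $F(y,c)\ge0$ for all $y$ and $c$; - $F(y,c)=0$ if $c\notin y$; - $\sum_{c\in\mathcal A\cap y}F(y,c)=B(y)$ whenever $y\cap\mathcal A\neq\emptyset$. We write $\mathrm{Supp}_F(c)=\sum_yF(y,c)$ and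 $\mathrm{maxMin}(\sigma,\mathcal A)=\sup_{F\in\mathfrak F_{\sigma,\mathcal A}}\min_{c\in\mathcal A}\mathrm{Supp}_F(c)$. We also write $\mathfrak F^{\mathrm{opt}}_{\sigma,\mathcal A}=\{F\in\mathfrak F_{\sigma,\mathcal A}:\mathrm{Supp}_F(c)\ge\mathrm{maxMin}(\sigma,\mathcal A)\ \forall c\in\mathcal A\}$, which is non-empty. The Open D'Hondt (ODH) rule proceeds as follows. Start with $\mathcal C_e=\emptyset$ and repeat $S$ times: - for each $c\in\mathcal C\setminus\mathcal C_e$, choose any $F\in\mathfrak F^{\mathrm{opt}}_{\sigma,\mathcal C_e\cup\{c\}}$ and set $s_c=\mathrm{Supp}_F(c)$; - then add to $\mathcal C_e$ some $w\in\mathcal C\setminus\mathcal C_e$ with $s_w=\max_{c\in\mathcal C\setminus\mathcal C_e}s_c$ (ties broken arbitrarily). Finally, output $\mathcal C_e$. *)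

From Stdlib Require Import Reals ClassicalEpsilon.
From mathcomp Require Import all_boot.

Set Implicit Arguments.
Unset Strict Implicit.
Unset Printing Implicit Defensive.

Section ODH.
Variable C : finType.
Variable B : {set C} -> nat.   (* B y = number of agents whose ballot is exactly y *)

Definition Supp (F : {set C} -> C -> R) (c : C) : R :=
  \big[Rplus/R0]_(y : {set C}) F y c.

(* F in \mathfrak F_{sigma,A}.  F is given as a function on all of
   2^C x C, but only its values on 2^C x A are constrained/used. *)
Definition in_family (A : {set C}) (F : {set C} -> C -> R) : Prop :=
  (forall (y : {set C}) (c : C), c \in A -> Rle R0 (F y c)) /\
  (forall (y : {set C}) (c : C), c \in A -> c \notin y -> F y c = R0) /\
  (forall y : {set C}, (y :&: A != set0) ->
     \big[Rplus/R0]_(c in A :&: y) F y c = INR (B y)).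

Definition minSupp_values (A : {set C}) (v : R) : Prop :=
  exists F, in_family A F /\
    (forall c, c \in A -> Rle v (Supp F c)) /\
    (exists2 c, c \in A & v = Supp F c).

Definition maxMin (A : {set C}) : R :=
  epsilon (inhabits R0) (fun m => is_lub (minSupp_values A) m).

Definition in_opt_family (A : {set C}) (F : {set C} -> C -> R) : Prop :=
  in_family A F /\ (forall c, c \in A -> Rle (maxMin A) (Supp F c)).

(* The run is recorded by the sequence w 0, w 1, ..., w (S-1) of chosen
   candidates; C_e^i = { w j | j < i } is the set of the first i chosen. *)
Definition chosen (w : nat -> C) (i : nat) : {set C} :=
  [set w (nat_of_ord j) | j : 'I_i].

(* w is a run of ODH with S seats, for some choice of the functions F
   (one F_c in F^opt_{sigma, C_e u {c}} per remaining candidate c, giving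
   s_c = Supp_{F_c}(c)) and some tie-breaking (w i is any maximiser). *)
Definition is_ODH_run (S : nat) (w : nat -> C) : Prop :=
  forall i, (i < S)%N ->
    w i \notin chosen w i /\
    exists Fs : C -> ({set C} -> C -> R),
      (forall c, c \notin chosen w i ->
         in_opt_family (c |: chosen w i) (Fs c)) /\
      (forall c, c \notin chosen w i ->
         Rle (Supp (Fs c) c) (Supp (Fs (w i)) (w i))).
End ODH.

(* Suppose F is optimal for A = C_e^i ∪ {c}, m = maxMin(A), but Supp_F(c) > m.
   Moving a little support of one agent from a candidate above level m to an
   approved candidate at level m keeps F optimal and lowers the number of
   candidates at level m, so we may assume that no ballot supporting a
   candidate above m approves a candidate at level m.  Let E be the candidates
   at level m and d > m the least support above m.  For X ⊆ A, gluing a near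
   optimal solution on X ∩ E with F on the ballots avoiding E shows
   maxMin(X) ≥ d as soon as maxMin(X ∩ E) ≥ d.  Along the run this propagates:
   maxMin(C_e^j ∪ {c}) ≤ s_c ≤ s_{w_j} = maxMin(C_e^{j+1}) (by induction on i),
   and (C_e^{j+1} ∪ {c}) ∩ E ⊆ C_e^{j+1} since c ∉ E.  At j = i we get
   m ≥ d, a contradiction. *)

From HB Require Import structures.
From Stdlib Require Import Reals Lra Classical ClassicalEpsilon.
From mathcomp Require Import all_boot.

Set Implicit Arguments.
Unset Strict Implicit.
Unset Printing Implicit Defensive.

Local Open Scope R_scope.

Lemma RplusA : associative Rplus. Proof. by move=> *; rewrite Rplus_assoc. Qed.

HB.instance Definition _ :=
  Monoid.isComLaw.Build R R0 Rplus RplusA Rplus_comm Rplus_0_l.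

Lemma ler_sumR (I : Type) (r : seq I) (P : pred I) (F G : I -> R) :
  (forall i, P i -> F i <= G i) ->
  \big[Rplus/R0]_(i <- r | P i) F i <= \big[Rplus/R0]_(i <- r | P i) G i.
Proof. by move=> FG; apply: (big_ind2 Rle) => *; [lra | lra | exact: FG]. Qed.

Lemma sumR_ge0 (I : Type) (r : seq I) (P : pred I) (F : I -> R) :
  (forall i, P i -> 0 <= F i) -> 0 <= \big[Rplus/R0]_(i <- r | P i) F i.
Proof. by move=> F0; apply: (big_ind (Rle 0)) => *; [lra | lra | exact: F0]. Qed.

Lemma ler_sumR_subset (T : finType) (P Q : {set T}) (g : T -> R) :
  P \subset Q -> (forall x, x \in Q -> 0 <= g x) ->
  \big[Rplus/R0]_(x in P) g x <= \big[Rplus/R0]_(x in Q) g x.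
Proof.
move=> sPQ g0; rewrite (big_setID (A := Q) P) /= (setIidPr sPQ).
have : 0 <= \big[Rplus/R0]_(x in Q :\: P) g x.
  by apply: sumR_ge0 => x /setDP[/g0].
lra.
Qed.

Lemma ler_sumR_term (T : finType) (Q : {set T}) (g : T -> R) i :
  i \in Q -> (forall x, x \in Q -> 0 <= g x) ->
  g i <= \big[Rplus/R0]_(x in Q) g x.
Proof.
move=> iQ g0; rewrite (bigD1 i) //=.
have : 0 <= \big[Rplus/R0]_(x in Q | x != i) g x by apply: sumR_ge0 => x /andP[/g0].
lra.
Qed.

Lemma sumR_delta (T : finType) (P : pred T) y0 (a : R) :
  P y0 -> \big[Rplus/R0]_(y | P y) (if y == y0 then a else 0) = a.
Proof.
move=> Py0; rewrite (bigD1 y0) //= eqxx big1 ?Rplus_0_r //.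
by move=> y /andP[_ /negbTE ->].
Qed.

Lemma seq_argminR (T : eqType) (g : T -> R) (a : T) (s : seq T) :
  exists2 x, x \in a :: s & forall x', x' \in a :: s -> g x <= g x'.
Proof.
elim: s a => [|b s IHs] a.
  by exists a => [|x']; rewrite ?mem_seq1 // => /eqP->; lra.
have [x xbs xmin] := IHs b.
have [gax|gxa] := Rle_dec (g a) (g x).
  exists a; first exact: mem_head.
  move=> x'; rewrite in_cons => /orP[/eqP->|/xmin]; lra.
exists x; first by rewrite in_cons xbs orbT.
move=> x'; rewrite in_cons => /orP[/eqP->|/xmin //]; lra.
Qed.

Lemma set_argminR (T : finType) (S : {set T}) (g : T -> R) x0 :
  x0 \in S -> exists2 x, x \in S & forall x', x' \in S -> g x <= g x'.
Proof.
move=> x0S; have [x xS xmin] := seq_argminR g x0 (enum S).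
exists x; first by move: xS; rewrite in_cons mem_enum => /orP[/eqP->|].
by move=> x' x'S; apply: xmin; rewrite in_cons mem_enum x'S orbT.
Qed.

Definition Rleb (a b : R) : bool := if Rle_dec a b then true else false.

Lemma RlebP a b : reflect (a <= b) (Rleb a b).
Proof. by rewrite /Rleb; case: Rle_dec => h; constructor. Qed.

Section Families.

Variables (C : finType) (B : {set C} -> nat).

Lemma in_family_fill (X : {set C}) (f : {set C} -> C -> R) :
  (forall (y : {set C}) (x : C), 0 <= f y x) ->
  (forall (y : {set C}) (x : C), x \notin y -> f y x = 0) ->
  (forall y : {set C},
     y :&: X != set0 -> \big[Rplus/R0]_(x in X :&: y) f y x <= INR (B y)) ->
  exists2 H, in_family B X H & forall (y : {set C}) (x : C), f y x <= H y x.
Proof.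
move=> f0 f_out f_sum.
pose r y := INR (B y) - \big[Rplus/R0]_(x in X :&: y) f y x.
have r0 y z : z \in X :&: y -> 0 <= r y.
  move=> zXy; suff /f_sum : y :&: X != set0 by rewrite /r; lra.
  by apply/set0Pn; exists z; rewrite setIC.
(* The slack [r y] of each ballot is given to one approved candidate of [X]. *)
pose H y x := f y x + if [pick z in X :&: y] is Some z then
                        if x == z then r y else 0 else 0.
have fH y x : f y x <= H y x.
  rewrite /H; case: pickP => [z zXy|_]; last lra.
  by case: (x == z); [have := r0 _ _ zXy|]; lra.
exists H => //; split; [|split].
- by move=> y x _; have := f0 y x; have := fH y x; lra.
- move=> y x _ xy; rewrite /H f_out //; case: pickP => [z|_]; last lra.
  case: eqP => [<-|_]; last lra.
  by rewrite inE (negbTE xy) andbF.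
- move=> y /set0Pn[z0]; rewrite setIC => z0Xy.
  rewrite /H big_split /=; case: pickP => [z zXy|/(_ z0)]; last by rewrite z0Xy.
  by rewrite sumR_delta //= /r; lra.
Qed.

Lemma in_family_exists (X : {set C}) : exists H, in_family B X H.
Proof.
have [|//||H famH _] := @in_family_fill X (fun _ _ => 0).
- by move=> *; lra.
- by move=> y _; rewrite big1 //; apply: pos_INR.
by exists H.
Qed.

Lemma maxMin_lub (X : {set C}) x0 :
  x0 \in X -> is_lub (minSupp_values B X) (maxMin B X).
Proof.
move=> x0X; apply: epsilon_spec.
suff [m m_lub] : {m | is_lub (minSupp_values B X) m} by exists m.
apply: completeness.
- exists (\big[Rplus/R0]_(y : {set C}) INR (B y)).
  move=> v [F [[F0 [F_out F_sum]] [_ [c cX ->]]]].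
  apply: ler_sumR => y _.
  have [cy|cy] := boolP (c \in y); last by rewrite F_out //; apply: pos_INR.
  have yX : y :&: X != set0 by apply/set0Pn; exists c; rewrite inE cy.
  rewrite -(F_sum y yX); apply: (ler_sumR_term (Q := X :&: y)); first by rewrite inE cX.
  by move=> x /setIP[xX _]; apply: F0.
- have [H famH] := in_family_exists X.
  have [x xX xmin] := set_argminR (Supp H) x0X.
  by exists (Supp H x), H; split=> //; split=> //; exists x.
Qed.

Lemma exists_Supp_le_maxMin (X : {set C}) H x0 :
  x0 \in X -> in_family B X H -> exists2 x, x \in X & Supp H x <= maxMin B X.
Proof.
move=> x0X famH; have [x xX xmin] := set_argminR (Supp H) x0X.
have [ub _] := maxMin_lub x0X.
by exists x => //; apply: ub; exists H; split=> //; split=> //; exists x.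
Qed.

Lemma maxMin_ge (X : {set C}) H v x0 :
  x0 \in X -> in_family B X H -> (forall x, x \in X -> v <= Supp H x) ->
  v <= maxMin B X.
Proof.
move=> x0X famH vH; have [x xX] := exists_Supp_le_maxMin x0X famH.
by have := vH x xX; lra.
Qed.

Lemma maxMin_approx (X : {set C}) v x0 :
  x0 \in X -> v < maxMin B X ->
  exists2 H, in_family B X H & forall x, x \in X -> v <= Supp H x.
Proof.
move=> x0X v_lt; apply: NNPP => noH.
have [_ lub] := maxMin_lub x0X.
suff : maxMin B X <= v by lra.
apply: lub => u [H [famH [Hmin [c cX u_eq]]]].
apply: Rnot_lt_le => v_lt_u; apply: noH; exists H => // x /Hmin; lra.
Qed.

Lemma maxMin_antimono (X Y : {set C}) x0 :
  x0 \in X -> X \subset Y -> maxMin B Y <= maxMin B X.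
Proof.
move=> x0X /subsetP sXY.
have [_ lub] := maxMin_lub (sXY _ x0X).
apply: lub => u [H [[H0 [H_out H_sum]] [Hmin _]]].
pose HX y x := if x \in X then H y x else 0.
have [|||H' famH' HH'] := @in_family_fill X HX.
- by move=> y x; rewrite /HX; case: ifP => [/sXY/H0|]; [|lra].
- by move=> y x xy; rewrite /HX; case: ifP => // /sXY xY; apply: H_out.
- move=> y /set0Pn[z /setIP[zy zX]].
  have yY : y :&: Y != set0 by apply/set0Pn; exists z; rewrite inE zy sXY.
  rewrite -(H_sum y yY); apply: (Rle_trans _ (\big[Rplus/R0]_(x in X :&: y) H y x)).
    by apply: Req_le; apply: eq_bigr => x /setIP[xX _]; rewrite /HX xX.
  by apply: ler_sumR_subset; [exact/setSI/subsetP | move=> x /setIP[/H0]].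
have [x xX x_le] := exists_Supp_le_maxMin x0X famH'.
apply: Rle_trans (Hmin x (sXY _ xX)) (Rle_trans _ _ _ _ x_le).
by apply: ler_sumR => y _; have := HH' y x; rewrite /HX xX.
Qed.

Section TightCandidates.

Variables (A E : {set C}) (K : {set C} -> C -> R) (d : R).
Hypothesis famK : in_family B A K.
Hypothesis K_sep : forall (y : {set C}) (x : C),
  x \in A -> x \notin E -> y :&: E != set0 -> K y x = 0.
Hypothesis d_le_Supp : forall x, x \in A -> x \notin E -> d <= Supp K x.

(* Ballots meeting [E] are served by [G] on [X :&: E], the others by [K]. *)
Lemma in_family_glue (X : {set C}) (G : {set C} -> C -> R) v :
  X \subset A -> v <= d ->
  in_family B (X :&: E) G -> (forall x, x \in X :&: E -> v <= Supp G x) ->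
  exists2 H, in_family B X H & forall x, x \in X -> v <= Supp H x.
Proof.
move=> /subsetP sXA v_le_d [G0 [G_out G_sum]] vG; have [K0 [K_out K_sum]] := famK.
pose f y x := if x \in X then
                if x \in E then G y x else if y :&: E == set0 then K y x else 0
              else 0.
have [|||H famH fH] := @in_family_fill X f.
- move=> y x; rewrite /f; case: ifP => xX; last lra.
  case: ifP => xE; first by apply: G0; rewrite inE xX.
  by case: ifP => _; [apply/K0/sXA | lra].
- move=> y x xy; rewrite /f; case: ifP => // xX.
  case: ifP => xE; first by apply: G_out; rewrite ?inE ?xX.
  by case: ifP => // _; apply/K_out/xy/sXA.
- move=> y /set0Pn[z /setIP[zy zX]].
  have [yE|yE] := boolP (y :&: E == set0).
    have yA : y :&: A != set0 by apply/set0Pn; exists z; rewrite inE zy sXA.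
    rewrite -(K_sum y yA); apply: (Rle_trans _ (\big[Rplus/R0]_(x in X :&: y) K y x)).
      apply: Req_le; apply: eq_bigr => x /setIP[xX xy]; rewrite /f xX yE.
      by case: ifP => // xE; move/eqP/setP: yE => /(_ x); rewrite !inE xy xE.
    by apply: ler_sumR_subset; [exact/setSI/subsetP | move=> x /setIP[/K0]].
  rewrite (eq_bigr (fun x => if x \in E then G y x else 0)); last first.
    by move=> x /setIP[xX _]; rewrite /f xX (negbTE yE); case: ifP.
  rewrite -big_mkcondr (eq_bigl (mem (X :&: E :&: y))); last first.
    by move=> x; rewrite !inE -!andbA (andbC (x \in y)).
  have [yXE|yXE] := boolP (y :&: (X :&: E) == set0).
    rewrite big_pred0; first exact: pos_INR.
    by move=> x; move/eqP/setP: yXE => /(_ x); rewrite !inE andbC.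
  by rewrite G_sum //; apply: Rle_refl.
exists H => // x xX; apply: (Rle_trans _ (Supp f x)); last exact: ler_sumR.
have [xE|xE] := boolP (x \in E).
  have -> : Supp f x = Supp G x by apply: eq_bigr => y _; rewrite /f xX xE.
  by apply: vG; rewrite inE xX.
have -> : Supp f x = Supp K x.
  apply: eq_bigr => y _; rewrite /f xX (negbTE xE).
  by case: ifP => // /negbT yE; rewrite K_sep ?sXA.
by apply: (Rle_trans _ d) => //; apply: d_le_Supp; rewrite ?sXA.
Qed.

Lemma maxMin_ge_glue (X : {set C}) x0 :
  x0 \in X -> X \subset A ->
  X :&: E = set0 \/ d <= maxMin B (X :&: E) -> d <= maxMin B X.
Proof.
move=> x0X sXA XE; apply: Rnot_lt_le => lt_d.
pose v := (maxMin B X + d) / 2.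
have [G famG vG] : exists2 G, in_family B (X :&: E) G &
    forall x, x \in X :&: E -> v <= Supp G x.
  have [XE0|[q qXE]] := set_0Vmem (X :&: E).
    by have [G famG] := in_family_exists (X :&: E); exists G => // x; rewrite XE0 inE.
  apply: (maxMin_approx qXE); case: XE => [XE0|]; first by rewrite XE0 inE in qXE.
  by rewrite /v; lra.
have [|H famH vH] := in_family_glue sXA _ famG vG; first by rewrite /v; lra.
by have := maxMin_ge x0X famH vH; rewrite /v; lra.
Qed.

End TightCandidates.

Definition shift_support (K : {set C} -> C -> R) (y : {set C}) (x z : C) (e : R)
    (y' : {set C}) (x' : C) : R :=
  K y' x' + if y' == y then if x' == z then e else if x' == x then - e else 0 else 0.

Lemma Supp_shift_support K (y : {set C}) x z e x' :
  Supp (shift_support K y x z e) x' =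
  Supp K x' + if x' == z then e else if x' == x then - e else 0.
Proof. by rewrite /Supp /shift_support big_split /= sumR_delta. Qed.

Lemma in_family_shift_support (A : {set C}) K (y : {set C}) x z e :
  in_family B A K -> x \in A -> z \in A -> x \in y -> z \in y -> x != z ->
  0 <= e <= K y x -> in_family B A (shift_support K y x z e).
Proof.
move=> [K0 [K_out K_sum]] xA zA xy zy xz e_bd.
split; [|split].
- move=> y' x' x'A; rewrite /shift_support; have := K0 y' x' x'A.
  case: eqP => [->|_]; last lra.
  by case: eqP => _; [|case: eqP => [->|_]]; lra.
- move=> y' x' x'A x'y'; rewrite /shift_support K_out //.
  case: eqP => [ey|_]; last lra; subst y'.
  by case: eqP => [ex|_]; [|case: eqP => [ex|_]]; [move: x'y'; rewrite ex ?zy ?xy.. | lra].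
- move=> y' y'A; rewrite /shift_support big_split /= K_sum //.
  case: eqP => [ey|_]; last by rewrite big1 //; lra.
  subst y'; rewrite (bigD1 z) /=; last by rewrite inE zA zy.
  rewrite (bigD1 x) /=; last by rewrite !inE xA xy xz.
  rewrite big1; first by rewrite eqxx (negbTE xz) eqxx; lra.
  by move=> x' /andP[/andP[_ /negbTE ->] /negbTE ->].
Qed.

Definition tight (A : {set C}) (m : R) (K : {set C} -> C -> R) : {set C} :=
  [set x in A | Rleb (Supp K x) m].

Definition flow_closed (A : {set C}) (m : R) (K : {set C} -> C -> R) : Prop :=
  forall (y : {set C}) (x z : C), x \in A -> m < Supp K x -> 0 < K y x ->
    z \in A -> z \in y -> m < Supp K z.

Lemma shift_support_to_tight (A : {set C}) K m c (y : {set C}) x z :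
  in_family B A K -> (forall x', x' \in A -> m <= Supp K x') -> m < Supp K c ->
  x \in A -> m < Supp K x -> 0 < K y x -> z \in A -> z \in y -> Supp K z <= m ->
  exists K', [/\ in_family B A K', forall x', x' \in A -> m <= Supp K' x',
    m < Supp K' c & (#|tight A m K'| < #|tight A m K|)%N].
Proof.
move=> famK m_le m_lt_c xA m_lt_x Kyx zA zy z_le.
have xz : x != z by apply/eqP => exz; rewrite -exz in z_le; lra.
pose e := Rmin (K y x) (Supp K x - m) / 2.
have [e0 e_le_K e_le_x] : [/\ 0 < e, e <= K y x & e <= (Supp K x - m) / 2].
  have := Rmin_l (K y x) (Supp K x - m); have := Rmin_r (K y x) (Supp K x - m).
  have : 0 < Rmin (K y x) (Supp K x - m) by apply: Rmin_pos; lra.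
  by rewrite /e; split; lra.
pose K' := shift_support K y x z e.
have Sz : Supp K' z = Supp K z + e by rewrite Supp_shift_support eqxx.
have Sx : Supp K' x = Supp K x - e.
  by rewrite Supp_shift_support eqxx (negbTE xz); lra.
have So x' : x' != z -> x' != x -> Supp K' x' = Supp K x'.
  by move=> /negbTE x'z /negbTE x'x; rewrite Supp_shift_support x'z x'x; lra.
have m_le' x' : x' \in A -> m <= Supp K' x'.
  move=> x'A; case: (eqVneq x' z) => [->|x'z]; first by rewrite Sz; have := m_le z zA; lra.
  by case: (eqVneq x' x) => [->|x'x]; [rewrite Sx; lra | rewrite So //; apply: m_le].
exists K'; split => //.
- have xy : x \in y by apply/negPn/negP => /(proj1 (proj2 famK) y x xA); lra.
  by apply: in_family_shift_support => //; lra.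
- case: (eqVneq c z) => [ecz|cz]; first by rewrite ecz in m_lt_c; lra.
  by case: (eqVneq c x) => [->|cx]; [rewrite Sx; lra | rewrite So].
have z_tight : z \in tight A m K by rewrite inE zA; apply/RlebP.
rewrite (cardsD1 z (tight A m K)) z_tight add1n ltnS; apply: subset_leq_card.
apply/subsetP => x'; rewrite !inE => /andP[x'A /RlebP x'_le].
case: (eqVneq x' z) => [ex|x'z]; first by move: x'_le; rewrite ex Sz; have := m_le z zA; lra.
case: (eqVneq x' x) => [ex|x'x]; first by move: x'_le; rewrite ex Sx; lra.
by rewrite x'A; apply/RlebP; rewrite -So.
Qed.

Lemma exists_flow_closed (A : {set C}) K m c :
  in_family B A K -> (forall x, x \in A -> m <= Supp K x) -> m < Supp K c ->
  exists K', [/\ in_family B A K', forall x, x \in A -> m <= Supp K' x,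
    m < Supp K' c & flow_closed A m K'].
Proof.
have [n] := ubnP #|tight A m K|.
elim: n K => // n IHn K tight_lt famK m_le m_lt_c.
have [[y [x [z [[xA m_lt_x Kyx] [zA zy z_le]]]]]|no_leak] := classic
    (exists (y : {set C}) x z, [/\ x \in A, m < Supp K x & 0 < K y x] /\
                               [/\ z \in A, z \in y & Supp K z <= m]).
  have [K' [famK' m_le' m_lt_c' lt']] :=
    shift_support_to_tight famK m_le m_lt_c xA m_lt_x Kyx zA zy z_le.
  exact: IHn (leq_trans lt' tight_lt) famK' m_le' m_lt_c'.
exists K; split=> // y x z xA m_lt_x Kyx zA zy.
by apply: Rnot_le_lt => z_le; apply: no_leak; exists y, x, z.
Qed.

End Families.

Section Chosen.

Variables (C : finType) (w : nat -> C).

Lemma chosenP j x : reflect (exists2 k, (k < j)%N & x = w k) (x \in chosen w j).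
Proof.
apply: (iffP imsetP) => [[k _ ->]|[k kj ->]]; first by exists k.
by exists (Ordinal kj).
Qed.

Lemma chosen0 : chosen w 0 = set0.
Proof. by apply/setP => x; rewrite inE; apply/chosenP => -[]. Qed.

Lemma chosenS j : chosen w j.+1 = w j |: chosen w j.
Proof.
apply/setP => x; rewrite !inE; apply/chosenP/predU1P.
  move=> [k]; rewrite ltnS leq_eqVlt => /predU1P[->|kj ->]; first by left.
  by right; apply/chosenP; exists k.
by case=> [->|/chosenP[k kj ->]]; [exists j | exists k => //; apply: ltnW].
Qed.

Lemma chosen_mono j i : (j <= i)%N -> chosen w j \subset chosen w i.
Proof.
move=> ji; apply/subsetP => x /chosenP[k kj ->]; apply/chosenP.
by exists k => //; apply: leq_trans ji.
Qed.

End Chosen.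

Section ODHRun.

Variables (C : finType) (B : {set C} -> nat) (S : nat) (w : nat -> C).
Hypothesis run : is_ODH_run B S w.

Lemma maxMin_ODH_step j c : (j < S)%N -> c \notin chosen w j ->
  (forall F, in_opt_family B (w j |: chosen w j) F ->
     Supp F (w j) = maxMin B (w j |: chosen w j)) ->
  maxMin B (c |: chosen w j) <= maxMin B (chosen w j.+1).
Proof.
move=> j_lt_S c_notin s_wj; have [wj_notin [Fs [Fs_opt Fs_max]]] := run j_lt_S.
rewrite chosenS -(s_wj _ (Fs_opt _ wj_notin)).
apply: Rle_trans (Fs_max c c_notin).
by have [_] := Fs_opt c c_notin; apply; rewrite setU11.
Qed.

Variables (i : nat) (c : C).
Hypothesis i_lt_S : (i < S)%N.
Hypothesis s_chosen : forall j, (j < i)%N -> forall F,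
  in_opt_family B (w j |: chosen w j) F -> Supp F (w j) = maxMin B (w j |: chosen w j).
Hypothesis c_notin : c \notin chosen w i.

Let A := c |: chosen w i.
Let m := maxMin B A.

Lemma flow_closed_Supp_le K :
  in_family B A K -> (forall x, x \in A -> m <= Supp K x) -> flow_closed A m K ->
  Supp K c <= m.
Proof.
move=> famK m_le closed; apply: Rnot_lt_le => m_lt_c.
have cA : c \in A by rewrite setU11.
pose E := tight A m K.
have [|x0 /setDP[x0A x0E] x0_min] := @set_argminR _ (A :\: E) (Supp K) c.
  by rewrite in_setD cA andbT inE cA; apply/negP => /RlebP; lra.
pose d := Supp K x0.
have m_lt_d : m < d by move: x0E; rewrite inE x0A => /RlebP/Rnot_le_lt.
have d_le x : x \in A -> x \notin E -> d <= Supp K x.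
  by move=> xA xE; apply: x0_min; rewrite inE xA xE.
have K_sep (y : {set C}) x : x \in A -> x \notin E -> y :&: E != set0 -> K y x = 0.
  move=> xA xE /set0Pn[z /setIP[zy]]; rewrite inE => /andP[zA /RlebP z_le].
  have m_lt_x : m < Supp K x by move: xE; rewrite inE xA => /RlebP/Rnot_le_lt.
  have [Kyx|//] := Rle_lt_or_eq_dec _ _ (proj1 famK y x xA).
  by have := closed y x z xA m_lt_x Kyx zA zy; lra.
have cE : c \notin E by rewrite inE cA; apply/RlebP; lra.
have chain j : (j <= i)%N -> d <= maxMin B (c |: chosen w j).
  have sub k : (k <= i)%N -> c |: chosen w k \subset A by move=> ki; apply/setUS/chosen_mono.
  elim: j => [_|j IHj ji].
    apply: (maxMin_ge_glue famK K_sep d_le (setU11 _ _) (sub 0%N isT)); left.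
    apply/setP => x; rewrite chosen0 setU0 in_set0.
    by apply/negbTE/setIP => -[/set1P ->]; apply/negP.
  apply: (maxMin_ge_glue famK K_sep d_le (setU11 _ _) (sub _ ji)).
  have [-> |[q qXE]] := set_0Vmem ((c |: chosen w j.+1) :&: E); [by left | right].
  have sub_chosen : (c |: chosen w j.+1) :&: E \subset chosen w j.+1.
    apply/subsetP => x /setIP[/setU1P[->|//] xE]; by rewrite xE in cE.
  apply: (Rle_trans _ _ _ _ (maxMin_antimono B qXE sub_chosen)).
  apply: (Rle_trans _ _ _ (IHj (ltnW ji)) (maxMin_ODH_step _ _ (s_chosen ji))).
    exact: ltn_trans ji i_lt_S.
  by apply: contra c_notin; apply/subsetP/chosen_mono/ltnW.
by have : d <= m := chain i (leqnn i); lra.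
Qed.

End ODHRun.

Theorem theorem2 (C : finType) (nV S : nat) (B : {set C} -> nat)
  (hS1 : (1 <= S)%N) (hSC : (S <= #|C|)%N)
  (hB : (\sum_(A : {set C}) B A <= nV)%N)
  (w : nat -> C) (hrun : is_ODH_run B S w) :
  forall i, (i < S)%N ->
  forall c, c \notin chosen w i ->
  forall F, in_opt_family B (c |: chosen w i) F ->
    Supp F c = maxMin B (c |: chosen w i).
Proof.
move=> i; elim/ltn_ind: i => i IHi i_lt_S c c_notin F [famF F_opt].
have s_chosen j : (j < i)%N -> forall F', in_opt_family B (w j |: chosen w j) F' ->
    Supp F' (w j) = maxMin B (w j |: chosen w j).
  move=> ji; have j_lt_S := ltn_trans ji i_lt_S.
  exact: IHi ji j_lt_S _ (proj1 (hrun j j_lt_S)).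
apply: Rle_antisym; last by apply: F_opt; rewrite setU11.
apply: Rnot_lt_le => m_lt_c.
have [K [famK m_le m_lt_cK closed]] := exists_flow_closed famF F_opt m_lt_c.
by have := flow_closed_Supp_le hrun i_lt_S s_chosen c_notin famK m_le closed; lra.
Qed.
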